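(* Consider the two-channel (Paris metro pricing) model described in the context, where $\phi$ is an increasing concave differentiable function with $\phi(x)\ge 0$ for all $x\ge0$. Then in the ISP's revenue maximization problem, the optimal consumer threshold is always $x_t=x_0$ (for any value of the CP cost parameter $a$, which does not enter the problem).
   Context: Model: fix $\gamma>2$, $\beta>2$, $\lambda>0$. Consumer types have density $x^{-\gamma}$ on $x\ge x_0:=(\frac{1}{\gamma-1})^{\frac{1}{\gamma-1}}$, CP types density $y^{-\beta}$ on $y\ge y_0:=(\frac{1}{\beta-1})^{\frac{1}{\beta-1}}$; $\bar X=\int_{x_0}^\infty x^{1-\gamma}dx$, $\bar Y=\int_{y_0}^\infty y^{1-\beta}dy$, $T_0=\bar X\bar Y$. The ISP splits capacity $1$ into a pay channel of capacity $B_1\in[0,1]$ and a free channel of capacity $1-B_1$. Consumers of type $\ge x_t$ participate; CPs of type $\ge y_t$ use the pay channel (paying $by$ for type $y$), CPs of type in $[y_0,y_t)$ use the free channel. Channel traffics are $T_1=\sqrt{B_1T_0\int_{x_t}^\infty x^{1-\gamma}dx\int_{y_t}^\infty y^{1-\beta}dy}$ and $T_2=\sqrt{(1-B_1)T_0\int_{x_t}^\infty x^{1-\gamma}dx\int_{y_0}^{y_t}y^{1-\beta}dy}$, with speeds $B_1T_0/T_1$ and $(1-B_1)T_0/T_2$. The membership fee and CP fee are set so threshold types are indifferent: $c=\phi\big((\int_{y_0}^{y_t}\frac{(1-B_1)T_0}{T_2}y^{1-\beta}dy+\int_{y_t}^\infty\frac{B_1T_0}{T_1}y^{1-\beta}dy)x_t\big)$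 and $\lambda y_t\int_{x_t}^\infty\frac{B_1T_0}{T_1}x^{1-\gamma}dx-by_t=\lambda y_t\int_{x_t}^\infty\frac{(1-B_1)T_0}{T_2}x^{1-\gamma}dx$. The ISP solves $\max_{x_t,y_t,B_1} R=c\int_{x_t}^\infty x^{-\gamma}dx+b\int_{y_t}^\infty y^{1-\beta}dy$ subject to $x_t\ge x_0$, $y_t\ge y_0$, $\frac{B_1T_0}{T_1}\ge\frac{(1-B_1)T_0}{T_2}$, $0\le B_1\le1$. *)

From Stdlib Require Import Reals.
From Coquelicot Require Import Coquelicot.
Open Scope R_scope.

Definition Iinf (f : R -> R) (a : R) : R :=
  RInt_gen f (at_point a) (Rbar_locally p_infty).

Definition x0 (gam : R) : R := Rpower (1 / (gam - 1)) (1 / (gam - 1)).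
Definition y0 (bet : R) : R := Rpower (1 / (bet - 1)) (1 / (bet - 1)).

Definition wx (gam x : R) : R := Rpower x (1 - gam).
Definition wy (bet y : R) : R := Rpower y (1 - bet).
Definition dx (gam x : R) : R := Rpower x (- gam).

Definition Xbar (gam : R) : R := Iinf (wx gam) (x0 gam).
Definition Ybar (bet : R) : R := Iinf (wy bet) (y0 bet).
Definition T0 (gam bet : R) : R := Xbar gam * Ybar bet.

Definition T1 (gam bet xt yt B1 : R) : R :=
  sqrt (B1 * T0 gam bet * Iinf (wx gam) xt * Iinf (wy bet) yt).
Definition T2 (gam bet xt yt B1 : R) : R :=
  sqrt ((1 - B1) * T0 gam bet * Iinf (wx gam) xt * RInt (wy bet) (y0 bet) yt).

Definition s1 (gam bet xt yt B1 : R) : R := B1 * T0 gam bet / T1 gam bet xt yt B1.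
Definition s2 (gam bet xt yt B1 : R) : R := (1 - B1) * T0 gam bet / T2 gam bet xt yt B1.

(* membership fee: threshold consumer indifferent *)
Definition cfee (phi : R -> R) (gam bet xt yt B1 : R) : R :=
  phi ((RInt (fun y => s2 gam bet xt yt B1 * wy bet y) (y0 bet) yt
        + Iinf (fun y => s1 gam bet xt yt B1 * wy bet y) yt) * xt).

(* CP fee b: the unique solution (yt > 0) of
   lam*yt*Int s1 x^{1-g} - b*yt = lam*yt*Int s2 x^{1-g} *)
Definition bfee (lam gam bet xt yt B1 : R) : R :=
  (lam * yt * Iinf (fun x => s1 gam bet xt yt B1 * wx gam x) xt
   - lam * yt * Iinf (fun x => s2 gam bet xt yt B1 * wx gam x) xt) / yt.

Definition revenue (phi : R -> R) (lam gam bet xt yt B1 : R) : R :=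
  cfee phi gam bet xt yt B1 * Iinf (dx gam) xt
  + bfee lam gam bet xt yt B1 * Iinf (wy bet) yt.

Definition feasible (gam bet xt yt B1 : R) : Prop :=
  x0 gam <= xt /\ y0 bet <= yt /\
  s1 gam bet xt yt B1 >= s2 gam bet xt yt B1 /\ 0 <= B1 <= 1.

(* Fix the content-provider threshold and the capacity split. As a function of the
   consumer threshold x, the revenue has the form
   phi (c x^(g/2)) x^(1-g) / (g-1) + s x^(1-g/2) with c >= 0.
   Concavity of phi with phi 0 >= 0 gives phi (a u) <= a phi u for a >= 1, so raising
   x from x' to r x' multiplies the revenue by at most r^(1-g/2) < 1; both channel
   speeds scale alike, so feasibility is preserved. The optimal revenue is positive
   (content providers pay a positive fee when all of them use the pay channel), hence
   an optimum with x > x0 would be strictly beaten by the same point with x = x0. *)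

From Stdlib Require Import Reals Lra.
From Coquelicot Require Import Coquelicot.
From Stdlib Require Import ssreflect.
Open Scope R_scope.

Lemma Rpower_gt0 x p : 0 < Rpower x p.
Proof. exact: exp_pos. Qed.

Lemma is_derive_Rpower p x : 0 < x ->
  is_derive (fun y => Rpower y p) x (p * Rpower x (p - 1)).
Proof. by move=> Hx; apply/is_derive_Reals/derivable_pt_lim_power. Qed.

Lemma continuous_Rpower p x : 0 < x -> continuous (fun y => Rpower y p) x.
Proof.
move=> Hx; apply: (@ex_derive_continuous R_AbsRing R_NormedModule).
by eexists; apply: is_derive_Rpower.
Qed.

Lemma is_lim_Rpower_p_infty p : p < 0 -> is_lim (fun x => Rpower x p) p_infty 0.
Proof.
move=> Hp; rewrite /Rpower.
apply: (is_lim_comp exp (fun x => p * ln x) p_infty 0 m_infty).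
- exact: is_lim_exp_m.
- have -> : m_infty = Rbar_mult p p_infty.
    by rewrite /=; destruct (Rle_dec 0 p); [exfalso; lra | ].
  by apply: is_lim_mult; [apply: is_lim_const | apply: is_lim_ln_p | rewrite /=; lra].
- by exists 0.
Qed.

Lemma eventually_Rmin_gt0 {a} : 0 < a ->
  filter_prod (at_point a) (Rbar_locally p_infty)
    (fun ab => 0 < Rmin (fst ab) (snd ab)).
Proof.
move=> Ha; apply: (Filter_prod _ _ _ (fun x => x = a) (fun y => 0 < y)) => //.
- by exists 0.
- by move=> x y -> Hy; apply: Rmin_glb_lt.
Qed.

Lemma is_RInt_gen_Rpower p a : p < -1 -> 0 < a ->
  is_RInt_gen (fun x => Rpower x p) (at_point a) (Rbar_locally p_infty)
    (Rpower a (p + 1) / - (p + 1)).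
Proof.
move=> Hp Ha.
pose F y := Rpower y (p + 1) / (p + 1).
have dF y : 0 < y -> is_derive F y (Rpower y p).
  move=> Hy; rewrite /F /Rdiv.
  have -> : Rpower y p = (p + 1) * Rpower y (p + 1 - 1) * / (p + 1).
    by replace (p + 1 - 1) with p by ring; field; lra.
  by apply: is_derive_scal_l; apply: is_derive_Rpower.
have DF y : 0 < y -> Derive F y = Rpower y p by move=> Hy; exact/is_derive_unique/dF.
apply: (is_RInt_gen_ext (Derive F)).
  move: (eventually_Rmin_gt0 Ha); apply: filter_imp => -[x y] /= Hab z [Hz _].
  by rewrite DF //; lra.
have -> : Rpower a (p + 1) / - (p + 1) = 0 - F a by rewrite /F; field; lra.
apply: is_RInt_gen_Derive.
- move: (eventually_Rmin_gt0 Ha); apply: filter_imp => -[x y] /= Hab z [Hz _].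
  by eexists; apply: dF; lra.
- move: (eventually_Rmin_gt0 Ha); apply: filter_imp => -[x y] /= Hab z [Hz' _].
  have Hz : 0 < z by lra.
  apply: (continuous_ext_loc _ (fun y => Rpower y p)); last exact: continuous_Rpower.
  by apply: filter_imp (open_gt 0 z Hz) => t Ht; rewrite DF.
- by move=> P HP; apply: locally_singleton.
- have : is_lim F p_infty (Rbar_mult 0 (/ (p + 1))).
    by apply: is_lim_scal_r; apply: is_lim_Rpower_p_infty; lra.
  by rewrite /= Rmult_0_l.
Qed.

Lemma Iinf_scal_Rpower c p a : p < -1 -> 0 < a ->
  Iinf (fun x => c * Rpower x p) a = c * (Rpower a (p + 1) / - (p + 1)).
Proof.
move=> Hp Ha; apply is_RInt_gen_unique.
exact: (is_RInt_gen_scal (fun x => Rpower x p) c _ (is_RInt_gen_Rpower p a Hp Ha)).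
Qed.

Lemma Iinf_Rpower p a : p < -1 -> 0 < a ->
  Iinf (fun x => Rpower x p) a = Rpower a (p + 1) / - (p + 1).
Proof. by move=> Hp Ha; apply is_RInt_gen_unique; apply: is_RInt_gen_Rpower. Qed.

Lemma sqrt_Rpower r p : 0 < r -> sqrt (Rpower r p) = Rpower r (p / 2).
Proof.
move=> Hr; rewrite -Rpower_sqrt ?Rpower_mult; last exact: Rpower_gt0.
by congr (Rpower r _); field.
Qed.

Definition concave_on_nonneg (phi : R -> R) : Prop :=
  forall u v t, 0 <= u -> 0 <= v -> 0 <= t <= 1 ->
    t * phi u + (1 - t) * phi v <= phi (t * u + (1 - t) * v).

(* Compare [u] with the point [t u] and the origin, at weights [1/t] and [1 - 1/t]. *)
Lemma concave_scale_le phi t u : concave_on_nonneg phi -> 0 <= phi 0 ->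
  1 <= t -> 0 <= u -> phi (t * u) <= t * phi u.
Proof.
move=> Hconc H0 Ht Hu.
have Hit : 0 < / t by apply: Rinv_0_lt_compat; lra.
have Hit' : 0 <= / t <= 1.
  by split; [lra | rewrite -Rinv_1; apply: Rinv_le_contravar; lra].
have Hle := Hconc (t * u) 0 (/ t) ltac:(nra) (Rle_refl 0) Hit'.
rewrite (_ : / t * (t * u) + (1 - / t) * 0 = u) in Hle; last by field; lra.
have Hmid : / t * phi (t * u) <= phi u.
  have : 0 <= (1 - / t) * phi 0 by apply: Rmult_le_pos; lra.
  lra.
rewrite -[phi (t * u)]Rmult_1_l -(Rinv_r t); last lra.
by rewrite Rmult_assoc; apply: Rmult_le_compat_l; lra.
Qed.

(* [tailw g x] and [taild g x] are the tails of [wx g] and [dx g] beyond [x];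
   [profile] is the revenue as a function of the consumer threshold [x] alone. *)
Definition tailw (g x : R) : R := Rpower x (2 - g) / (g - 2).
Definition taild (g x : R) : R := Rpower x (1 - g) / (g - 1).

Definition profile (g : R) (phi : R -> R) (K S x : R) : R :=
  phi (K * x / sqrt (tailw g x)) * taild g x + S * sqrt (tailw g x).

Section Tails.

Context {g : R} (Hg : 2 < g).

Lemma Iinf_wx x : 0 < x -> Iinf (wx g) x = tailw g x.
Proof.
move=> Hx; rewrite /wx Iinf_Rpower; try lra.
by rewrite /tailw; replace (1 - g + 1) with (2 - g) by ring; field; lra.
Qed.

Lemma Iinf_scal_wx c x : 0 < x -> Iinf (fun t => c * wx g t) x = c * tailw g x.
Proof.
move=> Hx; rewrite /wx Iinf_scal_Rpower; try lra.
by rewrite /tailw; replace (1 - g + 1) with (2 - g) by ring; field; lra.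
Qed.

Lemma Iinf_dx x : 0 < x -> Iinf (dx g) x = taild g x.
Proof.
move=> Hx; rewrite /dx Iinf_Rpower; try lra.
by rewrite /taild; replace (- g + 1) with (1 - g) by ring; field; lra.
Qed.

Lemma tailw_gt0 x : 0 < tailw g x.
Proof. by apply: Rdiv_lt_0_compat; [apply: Rpower_gt0 | lra]. Qed.

Lemma taild_gt0 x : 0 < taild g x.
Proof. by apply: Rdiv_lt_0_compat; [apply: Rpower_gt0 | lra]. Qed.

Lemma sqrt_tailw_scale r x : 0 < r -> 0 < x ->
  sqrt (tailw g (r * x)) = Rpower r (1 - g / 2) * sqrt (tailw g x).
Proof.
move=> Hr Hx; rewrite /tailw -Rpower_mult_distr // /Rdiv Rmult_assoc sqrt_mult_alt.
- by rewrite sqrt_Rpower //; congr (Rpower r _ * _); field.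
- by left; apply: Rpower_gt0.
Qed.

Lemma taild_scale r x : 0 < r -> 0 < x ->
  taild g (r * x) = Rpower r (1 - g) * taild g x.
Proof. by move=> Hr Hx; rewrite /taild -Rpower_mult_distr // /Rdiv Rmult_assoc. Qed.

(* Writing [x = r x'], the utility argument of [phi] grows like [r^(g/2)], the
   consumer mass shrinks like [r^(1-g)] and the fee term like [r^(1-g/2)]. *)
Lemma profile_decay phi K S x' x : concave_on_nonneg phi -> 0 <= phi 0 ->
  0 <= K -> 0 < x' -> x' <= x ->
  profile g phi K S x <= Rpower (x / x') (1 - g / 2) * profile g phi K S x'.
Proof.
move=> Hconc H0 HK Hx' Hx.
set r := x / x'.
have Hr : 1 <= r by apply/Rle_div_r; lra.
have Hr0 : 0 < r by lra.
have -> : x = r * x' by rewrite /r; field; lra.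
rewrite /profile sqrt_tailw_scale ?taild_scale //; try lra.
have HsT := sqrt_lt_R0 _ (tailw_gt0 x').
set u := K * x' / sqrt (tailw g x').
have Hu : 0 <= u by apply: Rdiv_le_0_compat; nra.
have Hsplit : r = Rpower r (g / 2) * Rpower r (1 - g / 2).
  by rewrite -Rpower_plus -[LHS]Rpower_1 //; congr (Rpower r _); ring.
have -> : K * (r * x') / (Rpower r (1 - g / 2) * sqrt (tailw g x')) = Rpower r (g / 2) * u.
  by rewrite {1}Hsplit /u; field; split; [lra | apply: Rgt_not_eq; apply: Rpower_gt0].
have Hmass : Rpower r (1 - g) * Rpower r (g / 2) = Rpower r (1 - g / 2).
  by rewrite -Rpower_plus; congr (Rpower r _); field.
have Ha : 1 <= Rpower r (g / 2).
  by rewrite -(Rpower_O r) //; apply: Rle_Rpower; lra.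
have Hw : 0 <= Rpower r (1 - g) * taild g x'.
  by apply: Rmult_le_pos; [left; apply: Rpower_gt0 | left; apply: taild_gt0].
have := Rmult_le_compat_r _ _ _ Hw (concave_scale_le _ _ _ Hconc H0 Ha Hu).
rewrite -Hmass; nra.
Qed.

End Tails.

Lemma x0_gt0 g : 0 < x0 g.
Proof. exact: Rpower_gt0. Qed.

Lemma y0_gt0 b : 0 < y0 b.
Proof. exact: Rpower_gt0. Qed.

Lemma Rdiv_sqrt_mul3 P c q : 0 <= P -> 0 < c -> 0 <= q ->
  P / sqrt (P * c * q) = sqrt P / sqrt q / sqrt c.
Proof.
move=> HP Hc Hq.
case: HP => [HP | <-]; last by rewrite !Rmult_0_l sqrt_0 /Rdiv !Rmult_0_l.
case: Hq => [Hq | <-]; last by rewrite Rmult_0_r sqrt_0 /Rdiv Rinv_0 !Rmult_0_r Rmult_0_l.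
have HsP := sqrt_lt_R0 _ HP; have Hsc := sqrt_lt_R0 _ Hc; have Hsq := sqrt_lt_R0 _ Hq.
rewrite !sqrt_mult_alt; try nra.
rewrite -{1}(sqrt_sqrt P); last lra.
by field; lra.
Qed.

Lemma sqrt_div_sqrt_ge0 p q : 0 <= sqrt p / sqrt q.
Proof.
apply: Rmult_le_pos; first exact: sqrt_pos.
case: (sqrt_pos q) => [Hq | <-]; last by rewrite Rinv_0; lra.
by left; apply: Rinv_0_lt_compat.
Qed.

(* The speeds [s1] and [s2] are these coefficients divided by [sqrt (tailw g x)],
   so the constraint [s1 >= s2] does not depend on the consumer threshold. *)
Definition pay_coef (g b yt B1 : R) : R := sqrt (B1 * T0 g b) / sqrt (tailw b yt).
Definition free_coef (g b yt B1 : R) : R :=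
  sqrt ((1 - B1) * T0 g b) / sqrt (RInt (wy b) (y0 b) yt).

Definition utility_coef (g b yt B1 : R) : R :=
  free_coef g b yt B1 * RInt (wy b) (y0 b) yt + pay_coef g b yt B1 * tailw b yt.

Definition cp_fee_coef (g b lam yt B1 : R) : R :=
  lam * (pay_coef g b yt B1 - free_coef g b yt B1) * tailw b yt.

Section Model.

Context {g b : R} (Hg : 2 < g) (Hb : 2 < b).

Lemma Iinf_wy y : 0 < y -> Iinf (wy b) y = tailw b y.
Proof. exact: Iinf_wx. Qed.

Lemma T0_gt0 : 0 < T0 g b.
Proof.
rewrite /T0 /Xbar /Ybar Iinf_wx ?Iinf_wy; try apply: x0_gt0; try apply: y0_gt0; try lra.
by apply: Rmult_lt_0_compat; apply: tailw_gt0; lra.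
Qed.

Lemma ex_RInt_wy yt : y0 b <= yt -> ex_RInt (wy b) (y0 b) yt.
Proof.
move=> Hy; apply: (@ex_RInt_continuous R_CompleteNormedModule) => z.
rewrite Rmin_left // => -[Hz _]; apply: continuous_Rpower.
by have := y0_gt0 b; lra.
Qed.

Lemma RInt_wy_ge0 yt : y0 b <= yt -> 0 <= RInt (wy b) (y0 b) yt.
Proof.
move=> Hy; apply: RInt_ge_0 => // [|z _]; first exact: ex_RInt_wy.
by left; apply: Rpower_gt0.
Qed.

Lemma RInt_scal_wy c yt : y0 b <= yt ->
  RInt (fun y => c * wy b y) (y0 b) yt = c * RInt (wy b) (y0 b) yt.
Proof. by move=> Hy; apply: (@RInt_scal R_CompleteNormedModule); apply: ex_RInt_wy. Qed.

Lemma pay_coef_ge0 yt B1 : 0 <= pay_coef g b yt B1.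
Proof. exact: sqrt_div_sqrt_ge0. Qed.

Lemma free_coef_ge0 yt B1 : 0 <= free_coef g b yt B1.
Proof. exact: sqrt_div_sqrt_ge0. Qed.

Lemma s1_eq x yt B1 : 0 < x -> y0 b <= yt -> 0 <= B1 ->
  s1 g b x yt B1 = pay_coef g b yt B1 / sqrt (tailw g x).
Proof.
move=> Hx Hy HB; have := y0_gt0 b => Hy0.
rewrite /s1 /T1 Iinf_wx // Iinf_wy; last lra.
rewrite Rdiv_sqrt_mul3 //; first by apply: Rmult_le_pos => //; apply/Rlt_le/T0_gt0.
- exact: tailw_gt0.
- by apply/Rlt_le/tailw_gt0.
Qed.

Lemma s2_eq x yt B1 : 0 < x -> y0 b <= yt -> B1 <= 1 ->
  s2 g b x yt B1 = free_coef g b yt B1 / sqrt (tailw g x).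
Proof.
move=> Hx Hy HB.
rewrite /s2 /T2 Iinf_wx // Rdiv_sqrt_mul3 //.
- by apply: Rmult_le_pos; [lra | apply/Rlt_le/T0_gt0].
- exact: tailw_gt0.
- exact: RInt_wy_ge0.
Qed.

Lemma utility_coef_ge0 yt B1 : y0 b <= yt -> 0 <= utility_coef g b yt B1.
Proof.
move=> Hy; apply: Rplus_le_le_0_compat; apply: Rmult_le_pos.
- exact: free_coef_ge0.
- exact: RInt_wy_ge0.
- exact: pay_coef_ge0.
- exact/Rlt_le/tailw_gt0.
Qed.

Lemma revenue_eq_profile phi lam x yt B1 : 0 < x -> y0 b <= yt -> 0 <= B1 <= 1 ->
  revenue phi lam g b x yt B1
  = profile g phi (utility_coef g b yt B1) (cp_fee_coef g b lam yt B1) x.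
Proof.
move=> Hx Hy HB; have Hyt : 0 < yt by have := y0_gt0 b; lra.
have HsA := sqrt_lt_R0 _ (tailw_gt0 Hg x).
have HA := sqrt_sqrt _ (Rlt_le _ _ (tailw_gt0 Hg x)).
rewrite /revenue /cfee /bfee RInt_scal_wy // Iinf_scal_wx ?Iinf_dx ?Iinf_wy //.
rewrite !Iinf_scal_wx // s1_eq ?s2_eq; try lra.
rewrite /profile /utility_coef /cp_fee_coef; set s := sqrt (tailw g x) in HsA HA *.
by congr (phi _ * _ + _); [| rewrite -HA]; field; lra.
Qed.

Lemma free_coef_full_pay yt : free_coef g b yt 1 = 0.
Proof. by rewrite /free_coef Rminus_eq_0 Rmult_0_l sqrt_0 /Rdiv Rmult_0_l. Qed.

Lemma feasible_coef_le {x yt B1} :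
  feasible g b x yt B1 -> free_coef g b yt B1 <= pay_coef g b yt B1.
Proof.
move=> [Hx [Hy [Hs HB]]]; have Hx0 : 0 < x by have := x0_gt0 g; lra.
rewrite s1_eq ?s2_eq in Hs; try lra.
have HsA := Rinv_0_lt_compat _ (sqrt_lt_R0 _ (tailw_gt0 Hg x)).
by apply: (Rmult_le_reg_r _ _ _ HsA); lra.
Qed.

Lemma feasible_at_x0 {x yt B1} : feasible g b x yt B1 -> feasible g b (x0 g) yt B1.
Proof.
move=> Hfeas; have [_ [Hy [_ HB]]] := Hfeas.
have Hx0 := x0_gt0 g.
split; [exact: Rle_refl | split; [exact: Hy | split; [| exact: HB]]].
rewrite s1_eq ?s2_eq; try lra.
apply/Rle_ge/Rmult_le_compat_r; first exact/Rlt_le/Rinv_0_lt_compat/sqrt_lt_R0/tailw_gt0.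
exact: feasible_coef_le Hfeas.
Qed.

Lemma feasible_full_pay : feasible g b (x0 g) (y0 b) 1.
Proof.
have Hx0 := x0_gt0 g.
split; [exact: Rle_refl | split; [exact: Rle_refl | split; [| lra]]].
rewrite s1_eq ?s2_eq ?free_coef_full_pay; try lra.
rewrite {2}/Rdiv Rmult_0_l; apply/Rle_ge/Rdiv_le_0_compat; first exact: pay_coef_ge0.
exact/sqrt_lt_R0/tailw_gt0.
Qed.

(* Positive through the content providers' fee alone, whatever [phi] is. *)
Lemma revenue_full_pay_gt0 phi lam : 0 < lam -> (forall u, 0 <= u -> 0 <= phi u) ->
  0 < revenue phi lam g b (x0 g) (y0 b) 1.
Proof.
move=> Hlam Hphi; have Hx0 := x0_gt0 g.
have HsA := sqrt_lt_R0 _ (tailw_gt0 Hg (x0 g)).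
rewrite revenue_eq_profile; try (split; lra); try lra.
rewrite /profile /cp_fee_coef free_coef_full_pay Rminus_0_r.
apply: Rplus_le_lt_0_compat.
- apply: Rmult_le_pos; last exact/Rlt_le/taild_gt0.
  apply/Hphi/Rdiv_le_0_compat => //; apply: Rmult_le_pos; last lra.
  by apply: utility_coef_ge0; lra.
- apply: Rmult_lt_0_compat => //; apply: Rmult_lt_0_compat; last exact: tailw_gt0.
  apply: Rmult_lt_0_compat => //; apply: Rdiv_lt_0_compat; apply: sqrt_lt_R0.
  + by rewrite Rmult_1_l; apply: T0_gt0.
  + exact: tailw_gt0.
Qed.

End Model.

Theorem theorem6 (gam bet lam : R) (phi : R -> R) :
  2 < gam -> 2 < bet -> 0 < lam ->
  (forall u v, 0 <= u -> u < v -> phi u < phi v) ->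
  (forall u v t, 0 <= u -> 0 <= v -> 0 <= t <= 1 ->
     t * phi u + (1 - t) * phi v <= phi (t * u + (1 - t) * v)) ->
  (forall u, 0 < u -> ex_derive phi u) ->
  (forall u, 0 <= u -> 0 <= phi u) ->
  forall xt yt B1 : R,
    feasible gam bet xt yt B1 ->
    (forall xt' yt' B1', feasible gam bet xt' yt' B1' ->
       revenue phi lam gam bet xt' yt' B1' <= revenue phi lam gam bet xt yt B1) ->
    xt = x0 gam.
Proof.
move=> Hg Hb Hlam _ Hconc _ Hphi xt yt B1 Hfeas Hopt.
have [Hx [Hy [_ HB]]] := Hfeas.
have Hx0 := x0_gt0 gam.
case: (Rle_lt_or_eq_dec _ _ Hx) => [Hlt | <-] //; exfalso.
set opt := revenue phi lam gam bet xt yt B1 in Hopt *.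
have Hopt_gt0 : 0 < opt.
  have := Hopt _ _ _ (feasible_full_pay Hg Hb).
  have := revenue_full_pay_gt0 Hg Hb phi lam Hlam Hphi.
  lra.
set e := Rpower (xt / x0 gam) (1 - gam / 2).
have He : 0 < e < 1.
  split; first exact: Rpower_gt0.
  rewrite -(Rpower_O (xt / x0 gam)); last by apply: Rdiv_lt_0_compat; lra.
  by apply: Rpower_lt; [apply/Rlt_div_r; lra | lra].
have Hdecay : opt <= e * revenue phi lam gam bet (x0 gam) yt B1.
  rewrite /opt !revenue_eq_profile //; try lra.
  apply: profile_decay => //; last exact: utility_coef_ge0.
  by apply: Hphi; lra.
have := Hopt _ _ _ (feasible_at_x0 Hg Hb Hfeas).
nra.
Qed.
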